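(* Let ${\cal X}$ be finite, $T$ an irreducible transition matrix on ${\cal X}$ reversible with respect to $\pi$ (i.e. $\pi(x)T(x,y)=\pi(y)T(y,x)$), and $\ddot{\cal X}=\{(x,y):T(x,y)>0\}$. Let $U$ and $U'$ be two families of probability distributions $U_x(y,\cdot)$, $U'_x(y,\cdot)$ on ${\cal X}$ (for $x,y\in{\cal X}$), each satisfying $T(x,y)\,U_x(y,z)=T(x,z)\,U_x(z,y)$ (resp. with $U'$) for all $x,y,z$ with $y\ne z$, and such that $U'_x(y,z)\ge U_x(y,z)$ for all $x,y,z\in{\cal X}$ with $y\neq z$. Define Markov chains on $\ddot{\cal X}$ with transition probabilities $\ddot T((x_0,x_1),(y_0,y_1))=\delta(x_1,y_0)U_{x_1}(x_0,y_1)$ and $\ddot T'((x_0,x_1),(y_0,y_1))=\delta(x_1,y_0)U'_{x_1}(x_0,y_1)$, and assume both are irreducible. For $f:{\cal X}\to\mathbb{R}$, let $\hat\mu_n$ and $\hat\mu'_n$ be the averages of $f$ applied to the second component of the first $n$ states of the $\ddot T$-chain and the $\ddot T'$-chain respectively. Then $\lim_{n\to\infty}n\,\mathrm{Var}(\hat\mu'_n)\le\lim_{n\to\infty}n\,\mathrm{Var}(\hat\mu_n)$.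
   Context: $\delta(a,b)=1$ if $a=b$ and $0$ otherwise. Both chains leave invariant $\ddot\pi(x,y)=\pi(x)T(x,y)$, whose second-component marginal is $\pi$. *)

From HB Require Import structures.
From mathcomp Require Import all_boot all_order all_algebra.
From mathcomp Require Import boolp classical_sets reals topology normedtype sequences.
Unset Printing Implicit Defensive.
Import Order.TTheory GRing.Theory Num.Theory.
Local Open Scope ring_scope.

Section Chains.
Variables (R : realType) (S : finType).

Definition prob_dist (p : S -> R) : Prop :=
  (forall s, 0 <= p s) /\ \sum_(s : S) p s = 1.

Definition stochastic (P : S -> S -> R) : Prop := forall s, prob_dist (P s).

Fixpoint mpow (P : S -> S -> R) (n : nat) : S -> S -> R :=
  match n with
  | 0 => fun s t => (s == t)%:R
  | m.+1 => fun s t => \sum_(u : S) mpow P m s u * P u t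
  end.

Definition irreducible (P : S -> S -> R) : Prop :=
  forall s t, exists n, 0 < mpow P n s t.

Definition reversible (pi : S -> R) (P : S -> S -> R) : Prop :=
  forall s t, pi s * P s t = pi t * P t s.

Fixpoint chainp (P : S -> S -> R) (x : S) (r : seq S) : R :=
  match r with
  | [::] => 1
  | y :: r' => P x y * chainp P y r'
  end.

Definition pathp (mu : S -> R) (P : S -> S -> R) (w : seq S) : R :=
  match w with
  | [::] => 1
  | x :: r => mu x * chainp P x r
  end.

Definition expect (mu : S -> R) (P : S -> S -> R) (n : nat)
  (F : seq S -> R) : R :=
  \sum_(w : n.-tuple S) pathp mu P w * F w.

Definition avg (g : S -> R) (w : seq S) : R :=
  (\sum_(s <- w) g s) / (size w)%:R.

Definition var_avg (mu : S -> R) (P : S -> S -> R) (g : S -> R) (n : nat) : R :=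
  expect mu P n (fun w => avg g w ^+ 2) - (expect mu P n (avg g)) ^+ 2.

End Chains.

Section Lifted.
Variables (R : realType) (X : finType).

Definition Xdd (T : X -> X -> R) : finType := {p : X * X | 0 < T p.1 p.2}.

Definition lifted (T : X -> X -> R) (U : X -> X -> X -> R)
  (s t : Xdd T) : R :=
  ((val s).2 == (val t).1)%:R * U (val s).2 (val s).1 (val t).2.

Definition pidd (T : X -> X -> R) (pi : X -> R) (s : Xdd T) : R :=
  pi (val s).1 * T (val s).1 (val s).2.

Definition snd_fun (T : X -> X -> R) (f : X -> R) (s : Xdd T) : R :=
  f (val s).2.

End Lifted.

Arguments prob_dist {R S}. Arguments stochastic {R S}. Arguments mpow {R S}.
Arguments irreducible {R S}. Arguments reversible {R S}. Arguments chainp {R S}.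
Arguments pathp {R S}. Arguments expect {R S}. Arguments avg {R S}.
Arguments var_avg {R S}.
Arguments Xdd {R X}. Arguments lifted {R X}. Arguments pidd {R X}.
Arguments snd_fun {R X}.

From HB Require Import structures.
From mathcomp Require Import all_boot all_order all_algebra.
From mathcomp Require Import boolp classical_sets reals topology normedtype sequences.
From mathcomp Require Import ring lra.
Import Order.TTheory GRing.Theory Num.Theory numFieldNormedType.Exports.
Local Open Scope ring_scope.
Local Open Scope classical_set_scope.

(* Let g be f read on the second component and a = g - E g.  With h solving the
   Poisson equation h - P h = a for the lifted kernel P, n Var(mu_n) tends to
   (E g)^2 + 2 <g, h> - <g, g>; a second Poisson solution shows the error is
   O(1/n).  The lifted kernel factors as P = K o Q, where Q (x, y) = (y, x)
   preserves the stationary law and K is reversible, so w = h o Q solves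
   w o Q - K w = a and the limit is a U-independent constant plus 2 <a, w>.
   Now <a, w> is the saddle value of x |-> 2 <a, x> - <x, x o Q> + <x, K x>:
   maximal along Q-even and minimal along Q-odd directions.  Evaluating the
   functionals of K and K' at a point reached from w by an even shift and from
   w' by an odd one, Peskun's inequality <x, K' x> <= <x, K x> gives
   <a, w'> <= <a, w>. *)

Section PathSums.
Context {R : realType} {S : finType}.
Implicit Types (P : S -> S -> R) (mu : S -> R) (F : seq S -> R).

Lemma big_tuple0 F : \sum_(w : 0.-tuple S) F w = F [::].
Proof. by rewrite (big_pred1 [tuple]) // => w; symmetry; apply/eqP; exact: tuple0. Qed.

Lemma big_tuple_cons n F :
  \sum_(w : n.+1.-tuple S) F w = \sum_(x : S) \sum_(w : n.-tuple S) F (x :: w).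
Proof.
rewrite pair_big /=.
rewrite (reindex (fun p : S * n.-tuple S => [tuple of p.1 :: p.2])) //=.
exists (fun w : n.+1.-tuple S => (thead w, [tuple of behead w])).
  by move=> [x w] _ /=; congr pair; apply: val_inj.
by move=> w _; rewrite [RHS]tuple_eta.
Qed.

Lemma expect_cons mu P n F :
  expect mu P n.+1 F =
  \sum_x mu x * \sum_(r : n.-tuple S) chainp P x r * F (x :: r).
Proof.
rewrite /expect (big_tuple_cons n (fun w => pathp mu P w * F w)).
apply: eq_bigr => x _; rewrite big_distrr; apply: eq_bigr => r _ /=.
by rewrite mulrA.
Qed.

Lemma chainp_sum_cons P x n F :
  \sum_(r : n.+1.-tuple S) chainp P x r * F r =
  \sum_y P x y * \sum_(r : n.-tuple S) chainp P y r * F (y :: r).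
Proof.
rewrite (big_tuple_cons n (fun r => chainp P x r * F r)); apply: eq_bigr => y _.
by rewrite big_distrr; apply: eq_bigr => r _ /=; rewrite mulrA.
Qed.

End PathSums.

Definition kact {R : realType} {S : finType} (P : S -> S -> R) (v : S -> R) s :=
  \sum_t P s t * v t.

Lemma kactD {R : realType} {S : finType} (P : S -> S -> R) u v s :
  kact P (fun t => u t + v t) s = kact P u s + kact P v s.
Proof. by rewrite /kact -big_split; apply: eq_bigr => t _; rewrite mulrDr. Qed.

Definition mean {R : realType} {S : finType} (pi v : S -> R) := \sum_s pi s * v s.

Definition stationary {R : realType} {S : finType} (pi : S -> R) (P : S -> S -> R) :=
  forall t, \sum_s pi s * P s t = pi t.

Lemma sum_delta {R : realType} {S : finType} (c : S) (G : S -> R) :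
  \sum_x (c == x)%:R * G x = G c.
Proof.
rewrite (bigD1 c) //= eqxx mul1r big1 ?addr0 // => x /negbTE.
by rewrite eq_sym => ->; rewrite mul0r.
Qed.

Lemma prob_dist_neq0 {R : realType} {S : finType} (pi : S -> R) :
  prob_dist pi -> exists s, pi s != 0.
Proof.
case=> _ pi_sum1; apply: contrapT => /forallNP pi0.
have : \sum_s pi s = 0 by apply: big1 => s _; apply/eqP/negPn/negP/pi0.
by rewrite pi_sum1 => /eqP; rewrite oner_eq0.
Qed.

Section Stochastic.
Context {R : realType} {S : finType} {P : S -> S -> R}.
Hypothesis P_stoch : stochastic P.

Lemma stochastic_ge0 s t : 0 <= P s t. Proof. by case: (P_stoch s). Qed.

Lemma stochastic_sum1 s : \sum_t P s t = 1. Proof. by case: (P_stoch s). Qed.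

Lemma kact_cst c s : kact P (fun _ => c) s = c.
Proof. by rewrite /kact -mulr_suml stochastic_sum1 mul1r. Qed.

Lemma kact_bound v M s : (forall t, `|v t| <= M) -> `|kact P v s| <= M.
Proof.
move=> v_le; rewrite /kact (le_trans (ler_norm_sum _ _ _)) //.
rewrite -[M]mul1r -(stochastic_sum1 s) mulr_suml ler_sum // => t _.
by rewrite normrM ger0_norm ?stochastic_ge0 // ler_wpM2l ?stochastic_ge0.
Qed.

Lemma reversible_stationary pi : reversible pi P -> stationary pi P.
Proof.
move=> rev t; under eq_bigr do rewrite rev.
by rewrite -mulr_sumr stochastic_sum1 mulr1.
Qed.

End Stochastic.

Section Moments.
Context {R : realType} {S : finType} (P : S -> S -> R) (pi g : S -> R).
Hypothesis P_stoch : stochastic P.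

Definition gsum (w : seq S) := \sum_(s <- w) g s.

Definition mom1 n x := \sum_(r : n.-tuple S) chainp P x r * gsum (x :: r).
Definition mom2 n x := \sum_(r : n.-tuple S) chainp P x r * gsum (x :: r) ^+ 2.

Lemma gsum_cons x r : gsum (x :: r) = g x + gsum r.
Proof. by rewrite /gsum big_cons. Qed.

Lemma chainp_sum1 n x : \sum_(r : n.-tuple S) chainp P x r = 1.
Proof.
elim: n x => [|n IH] x.
  by rewrite (big_tuple0 (fun r => chainp P x r)).
rewrite -[RHS](stochastic_sum1 P_stoch x).
have := chainp_sum_cons P x n (fun _ => 1).
under eq_bigr do rewrite mulr1; move=> ->.
by apply: eq_bigr => y _; under eq_bigr do rewrite mulr1; rewrite IH mulr1.
Qed.

Lemma chainp_sum_const n x c : \sum_(r : n.-tuple S) chainp P x r * c = c.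
Proof. by rewrite -mulr_suml chainp_sum1 mul1r. Qed.

Lemma mom1_0 x : mom1 0 x = g x.
Proof.
rewrite /mom1 (big_tuple0 (fun r => chainp P x r * gsum (x :: r))) /= mul1r.
by rewrite gsum_cons /gsum big_nil addr0.
Qed.

Lemma mom1S n x : mom1 n.+1 x = g x + kact P (mom1 n) x.
Proof.
rewrite /mom1 (chainp_sum_cons P x n (fun r => gsum (x :: r))) /kact.
rewrite -{1}(kact_cst P_stoch (g x) x) /kact -big_split /=.
apply: eq_bigr => y _; rewrite -mulrDr; congr (_ * _).
rewrite -{1}(chainp_sum_const n y (g x)) -big_split /=.
by apply: eq_bigr => r _; rewrite !gsum_cons; ring.
Qed.

Lemma mom2_0 x : mom2 0 x = g x ^+ 2.
Proof.
rewrite /mom2 (big_tuple0 (fun r => chainp P x r * gsum (x :: r) ^+ 2)) /= mul1r.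
by rewrite gsum_cons /gsum big_nil addr0.
Qed.

Lemma mom2S n x :
  mom2 n.+1 x = g x ^+ 2 + 2 * g x * kact P (mom1 n) x + kact P (mom2 n) x.
Proof.
rewrite /mom2 (chainp_sum_cons P x n (fun r => gsum (x :: r) ^+ 2)) /kact.
rewrite -{1}(kact_cst P_stoch (g x ^+ 2) x) /kact big_distrr -!big_split /=.
apply: eq_bigr => y _; rewrite [2 * g x * _]mulrCA -!mulrDr; congr (_ * _).
rewrite -{1}(chainp_sum_const n y (g x ^+ 2)) /mom1 big_distrr -!big_split /=.
by apply: eq_bigr => r _; rewrite !gsum_cons; ring.
Qed.

Lemma expect_avg n : expect pi P n.+1 (avg g) = mean pi (mom1 n) / n.+1%:R.
Proof.
rewrite expect_cons /mean mulr_suml; apply: eq_bigr => x _.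
rewrite -mulrA; congr (_ * _); rewrite /mom1 mulr_suml; apply: eq_bigr => r _.
by rewrite /avg /= size_tuple -/(gsum _) -!mulrA.
Qed.

Lemma expect_avg_sqr n :
  expect pi P n.+1 (fun w => avg g w ^+ 2) = mean pi (mom2 n) / n.+1%:R ^+ 2.
Proof.
rewrite expect_cons /mean mulr_suml; apply: eq_bigr => x _.
rewrite -mulrA; congr (_ * _); rewrite /mom2 mulr_suml; apply: eq_bigr => r _.
by rewrite /avg /= size_tuple -/(gsum _) expr_div_n -!mulrA.
Qed.

End Moments.

Lemma cvg_add_bounded_div {R : realType} (l M : R) (b : nat -> R) :
  (forall n, `|b n| <= M) -> (fun n => l + b n / n.+1%:R) @ \oo --> l.
Proof.
move=> b_le.
have cvg_harm (c : R) : (fun n : nat => l + c * harmonic n) @ \oo --> l.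
  rewrite -[X in _ --> X]addr0; apply: cvgD; first exact: cvg_cst.
  by rewrite -(mulr0 c); apply: cvgMl_tmp; exact: cvg_harmonic.
apply: (squeeze_cvgr _ (cvg_harm (- M)) (cvg_harm M)); apply: nearW => n /=.
have n1_gt0 : 0 < n.+1%:R :> R by rewrite ltr0n.
have := b_le n; rewrite ler_norml => /andP[lo hi].
rewrite !lerD2l !ler_pdivrMr // -!mulrA mulVf ?mulr1 ?gt_eqF //.
by apply/andP; split.
Qed.

Section AsymptoticVariance.
Context {R : realType} {S : finType} (P : S -> S -> R) (pi g : S -> R).
Hypotheses (P_stoch : stochastic P) (pi_stat : stationary pi P).
Hypothesis pi_ge0 : forall s, 0 <= pi s.

Local Notation kact := (kact P).
Local Notation mean := (mean pi).
Local Notation mom1 := (mom1 P g).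
Local Notation mom2 := (mom2 P g).
Local Notation mu := (mean g).

Lemma mean_kact v : mean (kact v) = mean v.
Proof.
rewrite /mean /kact; under eq_bigr do rewrite big_distrr.
rewrite exchange_big /=; apply: eq_bigr => t _.
by rewrite -pi_stat mulr_suml; apply: eq_bigr => s _; rewrite mulrA.
Qed.

Lemma kact_affine c u v w s :
  kact (fun t => c + u t + v t - w t) s = c + kact u s + kact v s - kact w s.
Proof.
rewrite /kact (eq_bigr (fun t => P s t * c + P s t * u t + P s t * v t - P s t * w t)).
  by rewrite sumrB !big_split /= -mulr_suml (stochastic_sum1 P_stoch) mul1r.
by move=> t _; ring.
Qed.

Lemma mean_mom1 n : mean (mom1 n) = n.+1%:R * mu.
Proof.
elim: n => [|n IH]; first by rewrite mul1r; apply: eq_bigr => s _; rewrite mom1_0.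
rewrite /mean; under eq_bigr do rewrite mom1S //.
rewrite (eq_bigr (fun s => pi s * g s + pi s * kact (mom1 n) s)); last by move=> s _; ring.
by rewrite big_split /= -/(mean _) -/(mean _) mean_kact IH -[n.+2%:R]natr1; ring.
Qed.

(* Solutions of the Poisson equations for g and for h; the iterates of h2 make
   the bounded remainder of [mom1] explicit. *)
Variables h h2 : S -> R.
Hypothesis h_poisson : forall s, h s - kact h s = g s - mu.
Hypothesis h2_poisson : forall s, h2 s - kact h2 s = h s.

Definition kiter n := iter n.+1 kact h2.

(* Telescoping, since P^k h = P^k h2 - P^(k+1) h2. *)
Lemma mom1_expansion n s : mom1 n s = n.+1%:R * mu + h s + kiter n.+1 s - kiter n s.
Proof.
elim: n s => [|n IH] s.
  have kact_h : kact h s = kact h2 s - kact (kact h2) s.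
    have -> : kact h s = kact (fun t => 0 + h2 t + 0 - kact h2 t) s.
      by apply: eq_bigr => t _; rewrite -h2_poisson add0r addr0.
    by rewrite kact_affine add0r (kact_cst P_stoch) addr0.
  by have := h_poisson s; rewrite mom1_0 mul1r /kiter /=; lra.
rewrite mom1S //.
have -> : kact (mom1 n) s = kact (fun t => n.+1%:R * mu + h t + kiter n.+1 t - kiter n t) s.
  by apply: eq_bigr => t _; rewrite IH.
by rewrite kact_affine; have := h_poisson s; rewrite -[n.+2%:R]natr1 /kiter /=; lra.
Qed.

Lemma mean_mul_affine (u v w y : S -> R) c :
  mean (fun s => u s * (c + v s + w s - y s)) =
  c * mean u + mean (fun s => u s * v s) + mean (fun s => u s * w s)
  - mean (fun s => u s * y s).
Proof. by rewrite /mean big_distrr -!big_split -sumrB /=; apply: eq_bigr => s _; ring. Qed.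

Definition asym_var := mu ^+ 2 + 2 * mean (fun s => g s * h s) - mean (fun s => g s ^+ 2).

Definition var_offset :=
  mean (fun s => g s ^+ 2) - mu ^+ 2 - asym_var - 2 * mean (fun s => g s * kiter 1 s).

Lemma mean_mom2 n : mean (mom2 n) =
  n.+1%:R ^+ 2 * mu ^+ 2 + n.+1%:R * asym_var + var_offset
  + 2 * mean (fun s => g s * kiter n.+1 s).
Proof.
elim: n => [|n IH].
  have -> : mean (mom2 0) = mean (fun s => g s ^+ 2).
    by apply: eq_bigr => s _; rewrite mom2_0.
  by rewrite /var_offset; ring.
have kact_mom1 x : kact (mom1 n) x = mom1 n.+1 x - g x by rewrite mom1S //; ring.
set c := n.+2%:R * mu.
have -> : mean (mom2 n.+1) = mean (fun s => g s ^+ 2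
    + 2 * g s * (c + h s + kiter n.+2 s - kiter n.+1 s - g s) + kact (mom2 n) s).
  by apply: eq_bigr => s _; rewrite mom2S // kact_mom1 mom1_expansion.
have -> : mean (fun s => g s ^+ 2
    + 2 * g s * (c + h s + kiter n.+2 s - kiter n.+1 s - g s) + kact (mom2 n) s)
  = 2 * mean (fun s => g s * (c + h s + kiter n.+2 s - kiter n.+1 s))
    - mean (fun s => g s ^+ 2) + mean (mom2 n).
  rewrite -(mean_kact (mom2 n)) /mean !big_distrr -sumrB -!big_split /=.
  by apply: eq_bigr => s _; ring.
by rewrite mean_mul_affine IH /asym_var /c -[n.+2%:R]natr1; ring.
Qed.

Lemma var_avg_expansion n : n.+1%:R * var_avg pi P g n.+1 =
  asym_var + (var_offset + 2 * mean (fun s => g s * kiter n.+1 s)) / n.+1%:R.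
Proof.
rewrite /var_avg expect_avg_sqr expect_avg mean_mom1 mean_mom2.
have n1_neq0 : n.+1%:R != 0 :> R by rewrite pnatr_eq0.
by field; rewrite addrC natr1.
Qed.

Lemma kiter_bound n s : `|kiter n s| <= \sum_t `|h2 t|.
Proof.
have h2_le t : `|h2 t| <= \sum_t `|h2 t|.
  by rewrite (bigD1 t) //= lerDl sumr_ge0.
elim: n s => [|n IH] s; apply: (kact_bound P_stoch); [exact: h2_le | exact: IH].
Qed.

Lemma var_avg_cvg : (fun n : nat => n%:R * var_avg pi P g n) @ \oo --> asym_var.
Proof.
rewrite -cvg_shiftS; under eq_fun do rewrite var_avg_expansion.
apply: (@cvg_add_bounded_div R _
  (`|var_offset| + 2 * \sum_s pi s * `|g s| * \sum_t `|h2 t|)) => n.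
rewrite (le_trans (ler_normD _ _)) // lerD2l normrM ger0_norm // ler_pM2l //.
rewrite /mean (le_trans (ler_norm_sum _ _ _)) // ler_sum // => s _.
by rewrite !normrM ger0_norm // -mulrA ler_wpM2l // ler_wpM2l // kiter_bound.
Qed.

End AsymptoticVariance.

Section Irreducible.
Context {R : realType} {S : finType} {P : S -> S -> R}.
Hypotheses (P_stoch : stochastic P) (P_irr : irreducible P).

Lemma mpow_ge0 n s t : 0 <= mpow P n s t.
Proof.
elim: n t => [|n IH] t /=; first by rewrite ler0n.
by apply: sumr_ge0 => u _; rewrite mulr_ge0 // (stochastic_ge0 P_stoch).
Qed.

Lemma mpow_kact (h : S -> R) : (forall s, kact P h s = h s) ->
  forall n s, \sum_t mpow P n s t * h t = h s.
Proof.
move=> h_harm; elim=> [|n IH] s /=; first exact: sum_delta.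
under eq_bigr do rewrite mulr_suml.
rewrite exchange_big /= -[RHS]IH; apply: eq_bigr => u _.
by rewrite -h_harm /kact mulr_sumr; apply: eq_bigr => t _; rewrite mulrA.
Qed.

Lemma mpow_sum1 n s : \sum_t mpow P n s t = 1.
Proof.
have := mpow_kact (fun _ => 1) (kact_cst P_stoch 1) n s.
by under eq_bigr do rewrite mulr1.
Qed.

Lemma stationary_mpow (pi : S -> R) : stationary pi P ->
  forall n t, \sum_s pi s * mpow P n s t = pi t.
Proof.
move=> pi_stat; elim=> [|n IH] t /=.
  by under eq_bigr do rewrite mulrC eq_sym; rewrite sum_delta.
under eq_bigr do rewrite mulr_sumr.
rewrite exchange_big /= -[RHS]pi_stat; apply: eq_bigr => u _.
by rewrite -IH mulr_suml; apply: eq_bigr => s _; rewrite mulrA.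
Qed.

Lemma stationary_irreducible_gt0 (pi : S -> R) : prob_dist pi -> stationary pi P ->
  forall t, 0 < pi t.
Proof.
move=> pi_dist pi_stat t; have [s0 pi_s0] := prob_dist_neq0 _ pi_dist.
have [pi_ge0 _] := pi_dist; have [n mpow_gt0] := P_irr s0 t.
rewrite -(stationary_mpow _ pi_stat n t) (bigD1 s0) //= ltr_wpDr //.
  by apply: sumr_ge0 => s _; rewrite mulr_ge0 ?mpow_ge0.
by rewrite mulr_gt0 // lt_def pi_s0 pi_ge0.
Qed.

(* Maximum principle: a harmonic function attains its maximum everywhere. *)
Lemma harmonic_const (h : S -> R) : (forall s, kact P h s = h s) ->
  forall s t, h s = h t.
Proof.
move=> h_harm s.
have [s0 _ h_max] := @arg_maxP _ _ S s xpredT h isT.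
suff h_s0 t : h t = h s0 by move=> t; rewrite !h_s0.
have [n mpow_gt0] := P_irr s0 t.
have sum0 : \sum_u mpow P n s0 u * (h s0 - h u) = 0.
  under eq_bigr do rewrite mulrBr.
  by rewrite sumrB -mulr_suml mpow_sum1 mul1r mpow_kact // subrr.
have terms_ge0 u : true -> 0 <= mpow P n s0 u * (h s0 - h u).
  by move=> _; rewrite mulr_ge0 ?mpow_ge0 // subr_ge0; exact: h_max.
have /(_ t isT)/eqP := psumr_eq0P terms_ge0 sum0.
by rewrite mulf_eq0 gt_eqF //= subr_eq0 => /eqP.
Qed.

End Irreducible.

Section PoissonEquation.
Context {R : realType} {S : finType} {P : S -> S -> R} { pi : S -> R }.
Hypotheses (P_stoch : stochastic P) (P_irr : irreducible P).
Hypotheses (pi_dist : prob_dist pi) (pi_stat : stationary pi P).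

Local Notation n := #|S|.

(* Row vectors are functions on S read through enum_rank; A is I - P^T in these
   coordinates, so u *m A = 0 means that u is P-harmonic. *)
Definition generator_mx : 'M[R]_n :=
  \matrix_(i, j) ((i == j)%:R - P (enum_val j) (enum_val i)).

Definition rv_fun (u : 'rV[R]_n) (s : S) := u 0 (enum_rank s).

Lemma generator_mxE u s :
  rv_fun (u *m generator_mx) s = rv_fun u s - kact P (rv_fun u) s.
Proof.
rewrite /rv_fun !mxE; under eq_bigr do rewrite mxE mulrBr.
rewrite sumrB (bigD1 (enum_rank s)) //= eqxx mulr1 big1 ?addr0; last first.
  by move=> i /negbTE ->; rewrite mulr0.
congr (_ - _); rewrite /kact enum_rankK.
rewrite (big_enum_val (fun t => P s t * u 0 (enum_rank t))) /=.
by apply: eq_bigr => i _; rewrite enum_valK mulrC.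
Qed.

Lemma kermx_generator_const : (kermx generator_mx <= (const_mx 1 : 'rV_n))%MS.
Proof.
apply/row_subP => i; set u := row i (kermx generator_mx).
have uA : u *m generator_mx = 0 by apply/sub_kermxP; exact: row_sub.
clearbody u.
have u_harm s : kact P (rv_fun u) s = rv_fun u s.
  by apply/eqP; rewrite eq_sym -subr_eq0 -generator_mxE uA /rv_fun mxE.
have [s0 _] := prob_dist_neq0 _ pi_dist.
have -> : u = rv_fun u s0 *: const_mx 1.
  apply/rowP => j; rewrite !mxE mulr1 -{1}(enum_valK j).
  exact: (harmonic_const P_stoch P_irr _ u_harm (enum_val j) s0).
by rewrite scalemx_sub // submx_refl.
Qed.

Definition pi_col : 'cV[R]_n := \col_i pi (enum_val i).

(* The range of A has codimension one (irreducibility) and lies in the hyperplane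
   orthogonal to pi (stationarity), hence equals it. *)
Lemma pi_orthogonal_range : (kermx pi_col <= generator_mx)%MS.
Proof.
have rank_ge : (n - 1 <= \rank generator_mx)%N.
  have := mxrankS kermx_generator_const; rewrite mxrank_ker => le1.
  by rewrite leq_subLR addnC -leq_subLR (leq_trans le1) // rank_leq_row.
have range_sub : (generator_mx <= kermx pi_col)%MS.
  apply/sub_kermxP; apply/matrixP => i j; rewrite !mxE.
  under eq_bigr do rewrite !mxE mulrBl.
  rewrite sumrB (bigD1 i) //= eqxx mul1r big1 ?addr0; last first.
    by move=> k /negbTE; rewrite eq_sym => ->; rewrite mul0r.
  rewrite -(big_enum_val (fun t => P t (enum_val i) * pi t)) /=.
  by under eq_bigr do rewrite mulrC; rewrite pi_stat subrr.
have rank_ker : \rank (kermx pi_col) = (n - 1)%N.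
  rewrite mxrank_ker; congr (_ - _)%N; apply/eqP; rewrite eqn_leq rank_leq_col /=.
  have [s0 pi_s0] := prob_dist_neq0 _ pi_dist.
  rewrite lt0n mxrank_eq0; apply: contraNneq pi_s0 => pi0.
  by have := congr1 (fun M : 'cV_n => M (enum_rank s0) 0) pi0; rewrite !mxE enum_rankK => ->.
have [le_rank <-] := mxrank_leqif_sup range_sub.
by rewrite eqn_leq le_rank rank_ker rank_ge.
Qed.

Lemma poisson_solution v : mean pi v = 0 ->
  exists h : S -> R, (forall s, h s - kact P h s = v s) /\ mean pi h = 0.
Proof.
move=> v_mean0; have [_ pi_sum1] := pi_dist.
pose vr : 'rV[R]_n := \row_i v (enum_val i).
have v_range : (vr <= generator_mx)%MS.
  apply: submx_trans pi_orthogonal_range; apply/sub_kermxP/matrixP => i j.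
  rewrite !mxE; under eq_bigr do rewrite !mxE.
  rewrite -(big_enum_val (fun s => v s * pi s)) -[RHS]v_mean0 /=.
  by apply: eq_bigr => s _; rewrite mulrC.
have [u vr_eq] := submxP v_range.
have u_sol s : rv_fun u s - kact P (rv_fun u) s = v s.
  by rewrite -generator_mxE -vr_eq /rv_fun mxE enum_rankK.
exists (fun s => rv_fun u s - mean pi (rv_fun u)); split.
  move=> s; rewrite -u_sol /kact; under eq_bigr do rewrite mulrBr.
  by rewrite sumrB -mulr_suml (stochastic_sum1 P_stoch) mul1r; lra.
rewrite /mean; under eq_bigr do rewrite mulrBr.
by rewrite sumrB -mulr_suml pi_sum1 mul1r subrr.
Qed.

End PoissonEquation.

Section Dirichlet.
Context {R : realType} {S : finType} (pi : S -> R).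

Definition inner (u v : S -> R) := \sum_s pi s * u s * v s.

Lemma eq_inner u u' v v' : u =1 u' -> v =1 v' -> inner u v = inner u' v'.
Proof. by move=> eq_u eq_v; apply: eq_bigr => s _; rewrite eq_u eq_v. Qed.

Lemma innerC u v : inner u v = inner v u.
Proof. by apply: eq_bigr => s _; rewrite mulrAC. Qed.

Lemma innerDr u v w : inner u (fun s => v s + w s) = inner u v + inner u w.
Proof. by rewrite /inner -big_split; apply: eq_bigr => s _; rewrite mulrDr. Qed.

Lemma innerDl u v w : inner (fun s => u s + v s) w = inner u w + inner v w.
Proof. by rewrite innerC innerDr ![inner w _]innerC. Qed.

Lemma innerBr u v w : inner u (fun s => v s - w s) = inner u v - inner u w.
Proof. by rewrite /inner -sumrB; apply: eq_bigr => s _; rewrite mulrBr. Qed.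

Lemma inner_kact_sym A : reversible pi A ->
  forall u v, inner u (kact A v) = inner v (kact A u).
Proof.
move=> A_rev u v; rewrite /inner /kact.
transitivity (\sum_s \sum_t pi s * A s t * u s * v t).
  by apply: eq_bigr => s _; rewrite mulr_sumr; apply: eq_bigr => t _; ring.
rewrite exchange_big /=; apply: eq_bigr => t _; rewrite mulr_sumr.
by apply: eq_bigr => s _; rewrite A_rev; ring.
Qed.

Lemma reversible_square_sum A (r : S -> R) (c : R) u :
  reversible pi A -> (forall s, \sum_t A s t = r s) ->
  \sum_s \sum_t pi s * A s t * (u s + c * u t) ^+ 2 =
  (1 + c ^+ 2) * (\sum_s pi s * r s * u s ^+ 2) + 2 * c * inner u (kact A u).
Proof.
move=> A_rev A_sum.
have sum_left : \sum_s \sum_t pi s * A s t * u s ^+ 2 = \sum_s pi s * r s * u s ^+ 2.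
  apply: eq_bigr => s _; rewrite -A_sum mulr_sumr mulr_suml.
  by apply: eq_bigr => t _; ring.
have sum_right : \sum_s \sum_t pi s * A s t * u t ^+ 2 = \sum_s pi s * r s * u s ^+ 2.
  rewrite exchange_big /=; apply: eq_bigr => t _; rewrite -A_sum mulr_sumr mulr_suml.
  by apply: eq_bigr => s _; rewrite A_rev; ring.
have sum_cross : \sum_s \sum_t pi s * A s t * (u s * u t) = inner u (kact A u).
  by apply: eq_bigr => s _; rewrite /kact mulr_sumr; apply: eq_bigr => t _; ring.
rewrite mulrDl mul1r -{1}sum_left -sum_right -sum_cross !mulr_sumr -!big_split /=.
apply: eq_bigr => s _; rewrite !mulr_sumr -!big_split /=.
by apply: eq_bigr => t _; ring.
Qed.

Hypothesis pi_ge0 : forall s, 0 <= pi s.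

Lemma reversible_kact_bounds K : reversible pi K -> stochastic K -> forall u,
  - inner u u <= inner u (kact K u) <= inner u u.
Proof.
move=> K_rev K_stoch u.
have sq_ge0 c : 0 <= \sum_s \sum_t pi s * K s t * (u s + c * u t) ^+ 2.
  do 2 (apply: sumr_ge0 => ? _).
  by rewrite mulr_ge0 ?sqr_ge0 // mulr_ge0 ?pi_ge0 // (stochastic_ge0 K_stoch).
have norm_u : \sum_s pi s * 1 * u s ^+ 2 = inner u u.
  by apply: eq_bigr => s _; rewrite mulr1 expr2 mulrA.
have := sq_ge0 (-1); rewrite (reversible_square_sum _ _ _ _ K_rev (stochastic_sum1 K_stoch)).
have := sq_ge0 1; rewrite (reversible_square_sum _ _ _ _ K_rev (stochastic_sum1 K_stoch)).
rewrite norm_u => ge1 geN1; apply/andP; split; nra.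
Qed.

Lemma peskun_inner_le K K' : reversible pi K -> reversible pi K' ->
  stochastic K -> stochastic K' -> (forall s t, s != t -> K s t <= K' s t) ->
  forall u, inner u (kact K' u) <= inner u (kact K u).
Proof.
move=> K_rev K'_rev K_stoch K'_stoch K_le u.
pose D s t := K s t - K' s t.
have D_rev : reversible pi D by move=> s t; rewrite /D !mulrBr K_rev K'_rev.
have D_sum s : \sum_t D s t = 0.
  by rewrite /D sumrB !(stochastic_sum1 K_stoch, stochastic_sum1 K'_stoch) subrr.
have := reversible_square_sum _ _ (-1) u D_rev D_sum.
have -> : \sum_s pi s * 0 * u s ^+ 2 = 0 by apply: big1 => s _; rewrite mulr0 mul0r.
have sq_le0 : \sum_s \sum_t pi s * D s t * (u s + -1 * u t) ^+ 2 <= 0.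
  apply: sumr_le0 => s _; apply: sumr_le0 => t _.
  have [->|neq_st] := eqVneq s t; first by rewrite mulN1r subrr expr0n /= mulr0.
  by rewrite -mulrA mulr_ge0_le0 // mulr_le0_ge0 ?sqr_ge0 // /D subr_le0 K_le.
have -> : inner u (kact D u) = inner u (kact K u) - inner u (kact K' u).
  rewrite -innerBr; apply: eq_inner => // s; rewrite /kact /D -sumrB.
  by apply: eq_bigr => t _; rewrite mulrBl.
lra.
Qed.

End Dirichlet.

Section Involution.
Context {R : realType} {S : finType} (pi : S -> R) (Q : S -> S).
Hypotheses (pi_ge0 : forall s, 0 <= pi s) (QK : involutive Q).
Hypothesis pi_Q : forall s, pi (Q s) = pi s.

Local Notation inner := (inner pi).

Lemma inner_comp_sym u v : inner u (v \o Q) = inner v (u \o Q).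
Proof.
rewrite /inner (reindex_inj (inv_inj QK)) /=.
by apply: eq_bigr => s _; rewrite QK pi_Q mulrAC.
Qed.

Definition lift_form K u := inner u (u \o Q) - inner u (kact K u).

Definition lift_functional K a x := 2 * inner a x - lift_form K x.

Lemma lift_functional_shift K a w d : reversible pi K ->
  (forall s, w (Q s) - kact K w s = a s) ->
  lift_functional K a (fun s => w s + d s) = inner a w - lift_form K d.
Proof.
move=> K_rev w_sol.
have a_eq v : inner v a = inner v (w \o Q) - inner v (kact K w).
  by rewrite -innerBr; apply: eq_inner => // s; rewrite -w_sol.
rewrite /lift_functional /lift_form.
rewrite (eq_inner _ (fun s => w s + d s) (fun s => w s + d s) _
  (fun s => (w \o Q) s + (d \o Q) s)) //.
rewrite (eq_inner _ (fun s => w s + d s) (fun s => w s + d s)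
  (kact K (fun s => w s + d s)) (fun s => kact K w s + kact K d s)) //; last first.
  by move=> s; rewrite kactD.
rewrite !innerDr !innerDl (inner_comp_sym w d) (inner_kact_sym _ _ K_rev w d).
rewrite (innerC _ a d) (innerC _ a w) !a_eq; lra.
Qed.

Lemma lift_form_even_ge0 K d : reversible pi K -> stochastic K ->
  (forall s, d (Q s) = d s) -> 0 <= lift_form K d.
Proof.
move=> K_rev K_stoch d_even; rewrite /lift_form (eq_inner _ d d _ d) //.
by have /andP[_] := reversible_kact_bounds _ pi_ge0 _ K_rev K_stoch d; rewrite subr_ge0.
Qed.

Lemma lift_form_odd_le0 K d : reversible pi K -> stochastic K ->
  (forall s, d (Q s) = - d s) -> lift_form K d <= 0.
Proof.
move=> K_rev K_stoch d_odd; rewrite /lift_form (eq_inner _ d d _ (fun s => - d s)) //.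
have -> : inner d (fun s => - d s) = - inner d d.
  by rewrite /inner -sumrN; apply: eq_bigr => s _; rewrite mulrN.
by have /andP[+ _] := reversible_kact_bounds _ pi_ge0 _ K_rev K_stoch d; rewrite subr_le0.
Qed.

Lemma lifted_peskun K K' a w w' :
  reversible pi K -> reversible pi K' -> stochastic K -> stochastic K' ->
  (forall s t, s != t -> K s t <= K' s t) ->
  (forall s, w (Q s) - kact K w s = a s) ->
  (forall s, w' (Q s) - kact K' w' s = a s) ->
  inner a w' <= inner a w.
Proof.
move=> K_rev K'_rev K_stoch K'_stoch K_le w_sol w'_sol.
(* x takes its Q-even part from w' and its Q-odd part from w. *)
pose x s := (w' s + w' (Q s)) / 2 + (w s - w (Q s)) / 2.
pose d' s := (w s - w (Q s)) / 2 - (w' s - w' (Q s)) / 2.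
pose d s := (w' s + w' (Q s)) / 2 - (w s + w (Q s)) / 2.
have x_w' : x = (fun s => w' s + d' s) by apply/funext => s; rewrite /x /d'; field.
have x_w : x = (fun s => w s + d s) by apply/funext => s; rewrite /x /d; field.
have d'_odd : lift_form K' d' <= 0.
  by apply: lift_form_odd_le0 => // s; rewrite /d' QK; field.
have d_even : 0 <= lift_form K d.
  by apply: lift_form_even_ge0 => // s; rewrite /d QK; field.
have F_le : lift_functional K' a x <= lift_functional K a x.
  have := peskun_inner_le _ pi_ge0 _ _ K_rev K'_rev K_stoch K'_stoch K_le x.
  by rewrite /lift_functional /lift_form; lra.
move: F_le; rewrite {1}x_w' x_w !lift_functional_shift //; lra.
Qed.

Lemma inner_comp_solution K a w : reversible pi K ->
  (forall s, kact K a s = a s) -> (forall s, w (Q s) - kact K w s = a s) ->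
  inner a (w \o Q) = inner a a + inner a w.
Proof.
move=> K_rev K_a w_sol.
rewrite (eq_inner _ a a _ (fun s => a s + kact K w s)) //; last first.
  by move=> s /=; rewrite -w_sol subrK.
rewrite innerDr (inner_kact_sym _ _ K_rev a w) (eq_inner _ w w _ a) //.
by rewrite [inner w a]innerC.
Qed.

End Involution.

Section LiftedChain.
Context {R : realType} {X : finType} (T : X -> X -> R) (pi : X -> R).
Hypotheses (T_stoch : stochastic T) (T_irr : irreducible T).
Hypotheses (pi_dist : prob_dist pi) (T_rev : reversible pi T).

Local Notation S := (Xdd T).
Local Notation pd := (pidd T pi).

Lemma reversible_gt0_sym x y : 0 < T x y -> 0 < T y x.
Proof.
have pi_gt0 := stationary_irreducible_gt0 T_stoch T_irr _ pi_dist
  (reversible_stationary T_stoch _ T_rev).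
move=> T_gt0; have : 0 < pi y * T y x by rewrite -T_rev mulr_gt0.
by rewrite pmulr_rgt0.
Qed.

Lemma T_eq0 p : ~~ (0 < T p.1 p.2) -> T p.1 p.2 = 0.
Proof.
by move=> T_ngt0; apply/eqP; rewrite eq_le leNgt T_ngt0 (stochastic_ge0 T_stoch).
Qed.

Definition edge_rev (s : S) : S := insubd s ((val s).2, (val s).1).

Lemma val_edge_rev s : val (edge_rev s) = ((val s).2, (val s).1).
Proof. by rewrite /edge_rev insubdK //=; apply: reversible_gt0_sym; exact: (valP s). Qed.

Lemma edge_revK : involutive edge_rev.
Proof. by move=> s; apply: val_inj; rewrite !val_edge_rev /=; case: (val s). Qed.

Lemma sum_Xdd (F : X * X -> R) : (forall p, ~~ (0 < T p.1 p.2) -> F p = 0) ->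
  \sum_(s : S) F (val s) = \sum_x \sum_y F (x, y).
Proof.
move=> F0; have -> : \sum_(s : S) F (val s) = \sum_(p | 0 < T p.1 p.2) F p.
  symmetry; rewrite (reindex_omap (val : S -> X * X) insub); last first.
    by move=> p T_gt0; rewrite insubT.
  apply: eq_bigl => -[p T_gt0] /=; rewrite insubT ?T_gt0 /=.
  by apply/eqP; congr Some; apply: val_inj.
rewrite pair_big /= big_mkcond /=; apply: eq_bigr => -[x y] _ /=.
by case: ifP => // T_ngt0; rewrite F0 // T_ngt0.
Qed.

Lemma pidd_dist : prob_dist pd.
Proof.
have [pi_ge0 pi_sum1] := pi_dist; split=> [s|].
  by rewrite /pidd mulr_ge0 ?pi_ge0 ?(stochastic_ge0 T_stoch).
rewrite /pidd (sum_Xdd (fun p => pi p.1 * T p.1 p.2)); last first.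
  by move=> p T_ngt0; rewrite T_eq0 // mulr0.
by rewrite /=; under eq_bigr do rewrite -mulr_sumr (stochastic_sum1 T_stoch) mulr1.
Qed.

Lemma pidd_edge_rev s : pd (edge_rev s) = pd s.
Proof. by rewrite /pidd val_edge_rev /= T_rev. Qed.

(* [lifted T U s t = lifted_flip U s (edge_rev t)], and [lifted_flip U] is
   reversible although [lifted T U] is not. *)
Definition lifted_flip U (s t : S) := lifted T U s (edge_rev t).

Lemma kact_lifted U v s : kact (lifted T U) v s = kact (lifted_flip U) (v \o edge_rev) s.
Proof. by rewrite /kact (reindex_inj (inv_inj edge_revK)). Qed.

Lemma lifted_flip_peskun U U' :
  (forall x y z, y != z -> U x y z <= U' x y z) ->
  forall s t, s != t -> lifted_flip U s t <= lifted_flip U' s t.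
Proof.
move=> U_le s t neq_st; rewrite /lifted_flip /lifted !val_edge_rev /=.
have [eq2|] := eqVneq (val s).2 (val t).2; last by rewrite !mul0r.
rewrite !mul1r eq2; apply: U_le; apply: contra neq_st => /eqP eq1; apply/eqP/val_inj.
by rewrite [val s]surjective_pairing [val t]surjective_pairing eq1 eq2.
Qed.

Section Lift.
Variable U : X -> X -> X -> R.
Hypothesis U_dist : forall x y, prob_dist (U x y).
Hypothesis U_balance : forall x y z, y != z -> T x y * U x y z = T x z * U x z y.

Local Notation P := (lifted T U).

Lemma U_balance_all x y z : T x y * U x y z = T x z * U x z y.
Proof. by have [->|] := eqVneq y z; [|exact: U_balance]. Qed.

Lemma U_eq0 x y z : 0 < T x y -> ~~ (0 < T x z) -> U x y z = 0.
Proof.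
move=> T_gt0 /(T_eq0 (x, z)) /= T0; have := U_balance_all x y z.
by rewrite T0 mul0r => /eqP; rewrite mulf_eq0 gt_eqF //= => /eqP.
Qed.

Lemma lifted_stochastic : stochastic P.
Proof.
move=> s; split=> [t|].
  by rewrite /lifted mulr_ge0 ?ler0n //; case: (U_dist (val s).2 (val s).1).
rewrite /lifted (sum_Xdd (fun p => ((val s).2 == p.1)%:R * U (val s).2 (val s).1 p.2)) /=.
  under eq_bigr do rewrite -mulr_sumr.
  by rewrite sum_delta; case: (U_dist (val s).2 (val s).1).
move=> [x y] /= T_ngt0; have [eq_x|] := eqVneq (val s).2 x; last by rewrite mul0r.
have T_gt0 : 0 < T (val s).2 (val s).1 by apply: reversible_gt0_sym; exact: (valP s).
by rewrite U_eq0 ?mulr0 // eq_x.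
Qed.

Lemma lifted_stationary : stationary pd P.
Proof.
move=> t; rewrite /pidd /lifted (sum_Xdd
  (fun p => pi p.1 * T p.1 p.2 * ((p.2 == (val t).1)%:R * U p.2 p.1 (val t).2))); last first.
  by move=> p T_ngt0; rewrite T_eq0 // mulr0 mul0r.
transitivity (\sum_x pi x * T x (val t).1 * U (val t).1 x (val t).2).
  apply: eq_bigr => x _.
  rewrite -(sum_delta (val t).1 (fun y => pi x * T x y * U y x (val t).2)) /=.
  by apply: eq_bigr => y _; rewrite eq_sym; ring.
under eq_bigr do rewrite T_rev -mulrA U_balance_all mulrA.
by rewrite -mulr_sumr; case: (U_dist (val t).1 (val t).2) => _ ->; rewrite mulr1.
Qed.

Lemma lifted_flip_reversible : reversible pd (lifted_flip U).
Proof.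
move=> s t; rewrite /pidd /lifted_flip /lifted !val_edge_rev /=.
case: (val s) => x1 x2; case: (val t) => y1 y2 /=.
have [<-|neq2] := eqVneq x2 y2; last by rewrite !mul0r !mulr0.
by rewrite !mul1r T_rev [pi y1 * _]T_rev -!mulrA U_balance_all.
Qed.

Lemma lifted_flip_stochastic : stochastic (lifted_flip U).
Proof.
move=> s; have [P_ge0 P_sum1] := lifted_stochastic s; split=> [t|]; first exact: P_ge0.
rewrite /lifted_flip (reindex_inj (inv_inj edge_revK)) /= -P_sum1.
by under eq_bigr do rewrite edge_revK.
Qed.

Lemma lifted_flip_snd_fun (f : X -> R) c s :
  kact (lifted_flip U) (fun t => snd_fun T f t - c) s = snd_fun T f s - c.
Proof.
have [_ P_sum1] := lifted_stochastic s.
rewrite /kact (reindex_inj (inv_inj edge_revK)) -[RHS]mul1r -P_sum1 mulr_suml /=.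
apply: eq_bigr => t _; rewrite /lifted_flip edge_revK /snd_fun val_edge_rev /lifted /=.
by have [->|_] := eqVneq (val s).2 (val t).1; rewrite ?mul0r.
Qed.

Hypothesis P_irr : irreducible P.
Variable f : X -> R.
Local Notation g := (snd_fun T f).
Local Notation mu := (mean pd g).
Local Notation a := (fun s : S => g s - mu).

Lemma lifted_var_cvg : exists w : S -> R,
  (forall s, w (edge_rev s) - kact (lifted_flip U) w s = a s) /\
  ((fun n : nat => n%:R * var_avg pd P g n) @ \oo -->
    mu ^+ 2 - mean pd (fun s => g s ^+ 2) + 2 * inner pd a a + 2 * inner pd a w).
Proof.
have [pd_ge0 pd_sum1] := pidd_dist.
have a_mean0 : mean pd a = 0.
  rewrite /mean; under eq_bigr do rewrite mulrBr.
  by rewrite sumrB -mulr_suml pd_sum1 mul1r subrr.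
have [h [h_sol h_mean0]] :=
  poisson_solution lifted_stochastic P_irr pidd_dist lifted_stationary _ a_mean0.
have [h2 [h2_sol _]] :=
  poisson_solution lifted_stochastic P_irr pidd_dist lifted_stationary _ h_mean0.
have w_sol s : h (edge_rev (edge_rev s)) - kact (lifted_flip U) (h \o edge_rev) s = a s.
  by rewrite edge_revK -kact_lifted h_sol.
exists (h \o edge_rev); split => //.
suff g_h : mean pd (fun s => g s * h s) = inner pd a a + inner pd a (h \o edge_rev).
  have := var_avg_cvg _ _ _ lifted_stochastic lifted_stationary pd_ge0 _ _ h_sol h2_sol.
  by rewrite /asym_var g_h; congr (_ --> _); ring.
rewrite -(inner_comp_solution _ _ _ _ _ lifted_flip_reversible
  (lifted_flip_snd_fun f mu) w_sol).
have -> : mean pd (fun s => g s * h s) = mean pd (fun s => g s * h s) - mu * mean pd h.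
  by rewrite h_mean0 mulr0 subr0.
rewrite /mean mulr_sumr -sumrB; apply: eq_bigr => s _ /=; rewrite edge_revK; ring.
Qed.

End Lift.

Lemma lifted_solution_le U U' (a w w' : S -> R) :
  (forall x y, prob_dist (U x y)) -> (forall x y, prob_dist (U' x y)) ->
  (forall x y z, y != z -> T x y * U x y z = T x z * U x z y) ->
  (forall x y z, y != z -> T x y * U' x y z = T x z * U' x z y) ->
  (forall x y z, y != z -> U x y z <= U' x y z) ->
  (forall s, w (edge_rev s) - kact (lifted_flip U) w s = a s) ->
  (forall s, w' (edge_rev s) - kact (lifted_flip U') w' s = a s) ->
  inner pd a w' <= inner pd a w.
Proof.
move=> U_dist U'_dist U_bal U'_bal U_le w_sol w'_sol; have [pd_ge0 _] := pidd_dist.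
apply: (lifted_peskun _ _ pd_ge0 edge_revK pidd_edge_rev _ _ _ _ _ _ _ _ _ _ w_sol w'_sol).
- exact: (lifted_flip_reversible _ U_bal).
- exact: (lifted_flip_reversible _ U'_bal).
- exact: (lifted_flip_stochastic _ U_dist U_bal).
- exact: (lifted_flip_stochastic _ U'_dist U'_bal).
- exact: lifted_flip_peskun.
Qed.

End LiftedChain.

Theorem mainTheorem3 (R : realType) (X : finType) (T : X -> X -> R)
  (pi : X -> R) (U U' : X -> X -> X -> R) (f : X -> R) :
  stochastic T -> irreducible T -> prob_dist pi -> reversible pi T ->
  (forall x y, prob_dist (U x y)) -> (forall x y, prob_dist (U' x y)) ->
  (forall x y z, y != z -> T x y * U x y z = T x z * U x z y) ->
  (forall x y z, y != z -> T x y * U' x y z = T x z * U' x z y) ->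
  (forall x y z, y != z -> U x y z <= U' x y z) ->
  irreducible (lifted T U) -> irreducible (lifted T U') ->
  exists l l' : R,
    (fun n : nat => n%:R * var_avg (pidd T pi) (lifted T U) (snd_fun T f) n)
      @ \oo --> l /\
    (fun n : nat => n%:R * var_avg (pidd T pi) (lifted T U') (snd_fun T f) n)
      @ \oo --> l' /\
    l' <= l.
Proof.
move=> T_stoch T_irr pi_dist T_rev U_dist U'_dist U_bal U'_bal U_le P_irr P'_irr.
have var_cvg := lifted_var_cvg T pi T_stoch T_irr pi_dist T_rev.
have [w [w_sol U_cvg]] := var_cvg U U_dist U_bal P_irr f.
have [w' [w'_sol U'_cvg]] := var_cvg U' U'_dist U'_bal P'_irr f.
do 2 eexists; split; first exact: U_cvg.
split; first exact: U'_cvg.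
rewrite lerD2l ler_pM2l //.
exact: (lifted_solution_le _ _ T_stoch T_irr pi_dist T_rev _ _ _ _ _
  U_dist U'_dist U_bal U'_bal U_le w_sol w'_sol).
Qed.
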